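(* Let $f_1$ and $f_2$ be polynomials (with rational coefficients in variables including $\alpha_1$ and $\alpha_l$) that are linear in $\alpha_1$, where $\alpha_l\neq\alpha_1$. For a polynomial $f$, let $lc(f)$ denote the leading coefficient of $f$ with respect to $\alpha_l$. Then either (1) $\frac{\partial\, lc(f_1)}{\partial\alpha_1}\, lc(f_2)|_{\alpha_1=0}-\frac{\partial\, lc(f_2)}{\partial\alpha_1}\, lc(f_1)|_{\alpha_1=0}=0$, or (2) $\frac{\partial\, lc(f_1)}{\partial\alpha_1}\, lc(f_2)|_{\alpha_1=0}-\frac{\partial\, lc(f_2)}{\partial\alpha_1}\, lc(f_1)|_{\alpha_1=0}= lc\!\left(\frac{\partial f_1}{\partial\alpha_1}\, f_2|_{\alpha_1=0}-\frac{\partial f_2}{\partial\alpha_1}\, f_1|_{\alpha_1=0}\right)$.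
   Context: A polynomial is linear in a variable $x$ if its degree in $x$ is at most one (it may be constant in $x$). The leading coefficient of a polynomial $f$ with respect to $\alpha_l$ is the coefficient (a polynomial in the remaining variables) of the highest power of $\alpha_l$ occurring in $f$. *)

From HB Require Import structures.
From mathcomp Require Import all_boot all_order all_algebra.
From mathcomp Require Import mpoly.
Set Implicit Arguments. Unset Strict Implicit. Unset Printing Implicit Defensive.
Import Order.TTheory GRing.Theory Num.Theory.
Local Open Scope ring_scope.

Section Defs.
Variables (n : nat) (R : comRingType).

(* degree of p in the variable x_l (0 for p = 0) *)
Definition mdegv (l : 'I_n) (p : {mpoly R[n]}) : nat :=
  (\max_(m <- msupp p) m l)%N.

Definition linear_in (i : 'I_n) (p : {mpoly R[n]}) : Prop :=
  (mdegv i p <= 1)%N.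

(* leading coefficient of p w.r.t. x_l: the coefficient (a polynomial in the
   remaining variables) of x_l ^ (mdegv l p) in p *)
Definition lcv (l : 'I_n) (p : {mpoly R[n]}) : {mpoly R[n]} :=
  \sum_(m <- msupp p | m l == mdegv l p)
     p@_m *: 'X_[(m - U_(l) *+ (m l))%MM].

Definition subst0 (i : 'I_n) (p : {mpoly R[n]}) : {mpoly R[n]} :=
  p \mPo [tuple if j == i then 0 else 'X_j | j < n].
End Defs.

From HB Require Import structures.
From mathcomp Require Import all_boot all_order all_algebra.
From mathcomp Require Import mpoly.
Import GRing.Theory.
Local Open Scope ring_scope.
Set Implicit Arguments. Unset Strict Implicit.

(* View a polynomial as a univariate polynomial in x_l over the polynomials in
   the other variables.  Since x_i is another variable, differentiating in x_i
   and setting x_i := 0 act coefficientwise, and the coefficient of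
   x_l^(d1 + d2) in f1' * f2(x_i = 0) - f2' * f1(x_i = 0), where d_k is the
   x_l-degree of f_k, is exactly the left-hand side D.  Nothing of higher
   degree occurs, so either D = 0 or D is the leading coefficient. *)

Section TopCoefficientOfProduct.
Variable S : nzSemiRingType.
Implicit Types P Q : {poly S}.

Lemma size_mul_leqD P Q a b :
  (size P <= a.+1)%N -> (size Q <= b.+1)%N -> (size (P * Q)%R <= (a + b).+1)%N.
Proof.
move=> sizeP sizeQ; apply: leq_trans (size_polyMleq P Q) _.
by rewrite -subn1 leq_subLR add1n -addnS -addSn leq_add.
Qed.

Lemma coefM_leqD P Q a b :
  (size P <= a.+1)%N -> (size Q <= b.+1)%N -> (P * Q)`_(a + b) = P`_a * Q`_b.
Proof.
move=> sizeP sizeQ; rewrite coefM (bigD1 (Ordinal (leq_addr b a.+1))) //=.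
rewrite addKn big1 ?addr0 // => j; rewrite -val_eqE /= => j_neq_a.
have [a_lt_j | j_le_a] := ltnP a j.
  by rewrite (leq_sizeP _ _ sizeP) ?mul0r.
rewrite [Q`_ _](leq_sizeP _ _ sizeQ) ?mulr0 //.
by rewrite ltn_subRL ltn_add2r ltn_neqAle j_neq_a.
Qed.
End TopCoefficientOfProduct.

Section CoefficientsInOneVariable.
Variables (n : nat) (R : comNzRingType) (l : 'I_n).
Implicit Types (p q : {mpoly R[n]}) (m : 'X_{1..n}).

Definition mcoefv (k : nat) p : {mpoly R[n]} :=
  \sum_(m <- msupp p | m l == k) p@_m *: 'X_[(m - U_(l) *+ (m l))%MM].

Lemma lcvE p : lcv l p = mcoefv (mdegv l p) p.
Proof. by []. Qed.

Definition polyv_var j : {poly {mpoly R[n]}} := if j == l then 'X else ('X_j)%:P.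

Definition polyv p := mmap (polyC \o @mpolyC n R) polyv_var p.

Lemma coef_polyv p k : (polyv p)`_k = mcoefv k p.
Proof.
rewrite /polyv /mmap coef_sum /mcoefv [RHS]big_mkcond /=; apply: eq_bigr => m _.
have -> : mmap1 polyv_var m =
          ('X_[(m - U_(l) *+ (m l))%MM])%:P * 'X^(m l).
  rewrite /mmap1 (bigD1 l) //= /polyv_var eqxx mulrC; congr (_ * _).
  rewrite [in RHS]mpolyXE_id [in RHS](bigD1 l) //= mnmBE mulmnE mnm1E eqxx.
  rewrite mul1n subnn expr0 mul1r rmorph_prod; apply: eq_bigr => j /negbTE jl.
  by rewrite jl rmorphXn mnmBE mulmnE mnm1E eq_sym jl mul0n subn0.
rewrite mulrA -polyCM coefMXn coefC mul_mpolyC.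
case: (ltnP k (m l)) => [/gtn_eqF -> // | ml_le_k].
by rewrite subn_eq0 eqn_leq ml_le_k.
Qed.

Lemma mcoefv0 k : mcoefv k 0 = 0.
Proof. by rewrite -coef_polyv /polyv mmap0 coef0. Qed.

Lemma mcoefvD k p q : mcoefv k (p + q) = mcoefv k p + mcoefv k q.
Proof. by rewrite -!coef_polyv /polyv mmapD coefD. Qed.

Lemma mcoefvZ k c p : mcoefv k (c *: p) = c *: mcoefv k p.
Proof. by rewrite -!coef_polyv /polyv mmapZ /= coefCM mul_mpolyC. Qed.

Lemma mcoefvX k m :
  mcoefv k 'X_[m] = if m l == k then 'X_[(m - U_(l) *+ k)%MM] else 0.
Proof.
rewrite /mcoefv msuppX big_cons big_nil addr0 mcoeffX eqxx scale1r.
by case: eqP => // ->.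
Qed.

Lemma mcoefv_linear_comm k (F : {linear {mpoly R[n]} -> {mpoly R[n]}}) :
    (forall m, mcoefv k (F 'X_[m]) = F (mcoefv k 'X_[m])) ->
  forall p, mcoefv k (F p) = F (mcoefv k p).
Proof.
move=> FX; elim/mpolyind => [|c m p _ _ IH]; first by rewrite !(raddf0, mcoefv0).
by rewrite !linearD !linearZ /= !mcoefvD !mcoefvZ FX IH !linearD !linearZ.
Qed.

Lemma mcoefv_gt_mdegv k p : (mdegv l p < k)%N -> mcoefv k p = 0.
Proof.
move=> deg_lt_k; rewrite /mcoefv big1_seq // => m /andP [/eqP ml_k m_p].
by move: deg_lt_k; rewrite -ml_k ltnNge (leq_bigmax_seq m).
Qed.

Lemma mcoeff_mcoefv p m : (mcoefv (m l) p)@_(m - U_(l) *+ (m l)) = p@_m.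
Proof.
rewrite /mcoefv raddf_sum /=.
have shift_inj m' : m' l = m l ->
    ((m' - U_(l) *+ m' l)%MM == (m - U_(l) *+ m l)%MM) = (m' == m).
  move=> ml'; apply/eqP/eqP => [/mnmP eq_m|->] //; apply/mnmP => j.
  move: (eq_m j); rewrite !mnmBE !mulmnE !mnm1E.
  by case: (l =P j) => [<-|_]; rewrite ?ml' ?muln0 ?subn0.
rewrite (eq_bigr (fun m' => p@_m' * (m' == m)%:R)) => [|m' /eqP ml'].
  have [m_p | m_notp] := boolP (m \in msupp p).
    rewrite big_mkcond (bigD1_seq m) ?msupp_uniq //= !eqxx mulr1 big1 ?addr0 //.
    by move=> m' /negbTE ->; rewrite mulr0 if_same.
  rewrite big1_seq => [|m' /andP [_ m'_p]].
    by apply/esym/eqP; rewrite mcoeff_eq0.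
  by case: eqP m'_p => [-> /[!(negbTE m_notp)] | _ _]; rewrite ?mulr0.
by rewrite mcoeffZ mcoeffX shift_inj.
Qed.

Lemma mdegv_leq p d :
  (forall k, (d < k)%N -> mcoefv k p = 0) -> (mdegv l p <= d)%N.
Proof.
move=> vanish; apply/bigmax_leqP_seq => m m_p _; rewrite leqNgt.
apply: contraL m_p => d_lt_ml.
by rewrite mcoeff_msupp -mcoeff_mcoefv vanish // mcoeff0 eqxx.
Qed.

Lemma lcv_polyv p d :
  (size (polyv p) <= d.+1)%N -> (polyv p)`_d != 0 -> lcv l p = (polyv p)`_d.
Proof.
rewrite coef_polyv lcvE => size_le top_neq0.
suff -> : mdegv l p = d by [].
apply/eqP; rewrite eqn_leq mdegv_leq => [|k d_lt_k]; last first.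
  by rewrite -coef_polyv (leq_sizeP _ _ size_le).
by rewrite leqNgt; apply: contra top_neq0 => /mcoefv_gt_mdegv ->.
Qed.

Lemma size_polyv_le (F : {mpoly R[n]} -> {mpoly R[n]}) p :
    F 0 = 0 -> (forall k q, mcoefv k (F q) = F (mcoefv k q)) ->
  (size (polyv (F p)) <= (mdegv l p).+1)%N.
Proof.
move=> F0 F_comm; apply/leq_sizeP => k deg_lt_k.
by rewrite coef_polyv F_comm mcoefv_gt_mdegv.
Qed.

Variable i : 'I_n.
Hypothesis l_neq_i : l != i.

Lemma mcoefv_mderiv k p : mcoefv k p^`M(i) = (mcoefv k p)^`M(i).
Proof.
apply: (mcoefv_linear_comm (F := mderiv i)) => m /=.
rewrite mderivX mcoefvZ !mcoefvX mnmBE mnm1E [i == l]eq_sym (negbTE l_neq_i) subn0.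
case: eqP => _; last by rewrite mderiv0 scaler0.
rewrite mderivX mnmBE mulmnE mnm1E (negbTE l_neq_i) mul0n subn0.
by congr (_ *: 'X_[_]); apply/mnmP => j; rewrite !mnmBE subnAC.
Qed.

Lemma subst00 : subst0 i (0 : {mpoly R[n]}) = 0.
Proof. exact: comp_mpoly0. Qed.

Lemma subst0X m :
  subst0 i ('X_[m] : {mpoly R[n]}) = if m i == 0%N then 'X_[m] else 0.
Proof.
rewrite /subst0 comp_mpolyX (bigD1 i) //= tnth_mktuple eqxx expr0n.
case: eqP => [mi0|]; last by rewrite mul0r.
rewrite mul1r mpolyXE_id [RHS](bigD1 i) //= mi0 expr0 mul1r.
by apply: eq_bigr => j /negbTE ji; rewrite tnth_mktuple ji.
Qed.

Lemma mcoefv_subst0 k p : mcoefv k (subst0 i p) = subst0 i (mcoefv k p).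
Proof.
apply: (mcoefv_linear_comm (F := comp_mpoly _)) => m.
change (mcoefv k (subst0 i 'X_[m]) = subst0 i (mcoefv k 'X_[m])).
have mi_shift : (m - U_(l) *+ k)%MM i = m i.
  by rewrite mnmBE mulmnE mnm1E (negbTE l_neq_i) mul0n subn0.
rewrite subst0X mcoefvX (fun_if (mcoefv k)) (fun_if (subst0 i)).
rewrite mcoefv0 subst00 mcoefvX subst0X mi_shift.
by case: (m i == 0%N); case: (m l == k).
Qed.

Lemma size_polyv_mderiv p : (size (polyv p^`M(i)) <= (mdegv l p).+1)%N.
Proof. by apply: size_polyv_le; [exact: mderiv0 | exact: mcoefv_mderiv]. Qed.

Lemma size_polyv_subst0 p : (size (polyv (subst0 i p)) <= (mdegv l p).+1)%N.
Proof. by apply: size_polyv_le; [exact: subst00 | exact: mcoefv_subst0]. Qed.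

Lemma size_polyv_mderiv_subst0 p q :
  (size (polyv p^`M(i) * polyv (subst0 i q))%R <= (mdegv l p + mdegv l q).+1)%N.
Proof. exact: size_mul_leqD (size_polyv_mderiv p) (size_polyv_subst0 q). Qed.

Lemma coef_polyv_mderiv_subst0 p q :
  (polyv p^`M(i) * polyv (subst0 i q))`_(mdegv l p + mdegv l q) =
  (lcv l p)^`M(i) * subst0 i (lcv l q).
Proof.
rewrite !lcvE -mcoefv_mderiv -mcoefv_subst0 -!coef_polyv.
exact: coefM_leqD (size_polyv_mderiv p) (size_polyv_subst0 q).
Qed.

End CoefficientsInOneVariable.

Theorem lcv_cross_mderiv_subst0 (R : comNzRingType) (n : nat) (i l : 'I_n)
    (f1 f2 : {mpoly R[n]}) : l != i ->
  let D := (lcv l f1)^`M(i) * subst0 i (lcv l f2)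
           - (lcv l f2)^`M(i) * subst0 i (lcv l f1) in
  D = 0 \/ D = lcv l (f1^`M(i) * subst0 i f2 - f2^`M(i) * subst0 i f1).
Proof.
move=> l_neq_i D; have [-> | D_neq0] := eqVneq D 0; [by left | right].
set E := _ - _.
have polyvE : polyv l E = polyv l f1^`M(i) * polyv l (subst0 i f2)
                          - polyv l f2^`M(i) * polyv l (subst0 i f1).
  by rewrite /polyv mmapB !rmorphM.
have sizeE : (size (polyv l E) <= (mdegv l f1 + mdegv l f2).+1)%N.
  rewrite polyvE (leq_trans (size_polyD _ _)) // geq_max size_polyN.
  apply/andP; split; first exact: size_polyv_mderiv_subst0.
  by rewrite addnC; exact: size_polyv_mderiv_subst0.
have topE : (polyv l E)`_(mdegv l f1 + mdegv l f2) = D.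
  rewrite polyvE coefB; congr (_ - _).
    exact: coef_polyv_mderiv_subst0.
  rewrite addnC; exact: coef_polyv_mderiv_subst0.
by rewrite (lcv_polyv sizeE) topE.
Qed.

Theorem lemma3p6 (n : nat) (i l : 'I_n) (f1 f2 : {mpoly rat[n]}) :
  l != i -> linear_in i f1 -> linear_in i f2 ->
  let D := (lcv l f1)^`M(i) * subst0 i (lcv l f2)
           - (lcv l f2)^`M(i) * subst0 i (lcv l f1) in
  D = 0 \/ D = lcv l (f1^`M(i) * subst0 i f2 - f2^`M(i) * subst0 i f1).
Proof. by move=> l_neq_i _ _; apply: lcv_cross_mderiv_subst0. Qed.
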